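(* For every $m\in\mathbb{N}$ and every real $t$ with $|t|<1$, \[ \left(\frac{\arcsin t}{t}\right)^{m}=1+\sum_{k=1}^{\infty}(-1)^k\frac{Q(m,2k;2)}{\binom{m+2k}{m}}\frac{(2t)^{2k}}{(2k)!}, \] where the left-hand side is defined to be $1$ at $t=0$.
   Context: $s(n,k)$ ($n\ge k\ge 0$) denotes the signed Stirling numbers of the first kind, defined by $\frac{[\ln(1+x)]^k}{k!}=\sum_{n=k}^\infty s(n,k)\frac{x^n}{n!}$ for $|x|<1$; equivalently $\prod_{j=0}^{n-1}(z-j)=\sum_{k=0}^n s(n,k)z^k$. For $m\in\mathbb{N}$, $k\in\mathbb{N}_0$ and $\alpha\in\mathbb{R}$ define \[ Q(m,k;\alpha)=\sum_{\ell=0}^{k}\binom{m+\ell-1}{m-1}\, s(m+k-1,m+\ell-1)\left(\frac{m+k-\alpha}{2}\right)^{\ell}, \] with the convention $0^0=1$. *)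

From HB Require Import structures.
From mathcomp Require Import all_boot all_order all_algebra.
From mathcomp Require Import all_classical all_reals all_analysis.
Set Implicit Arguments. Unset Strict Implicit. Unset Printing Implicit Defensive.
Import Order.TTheory GRing.Theory Num.Theory.
Local Open Scope ring_scope.

Definition stirling1 (n k : nat) : int :=
  (\prod_(j < n) ('X - ((j : nat)%:Z)%:P) : {poly int})`_k.

Definition Qfun {R : realType} (m k : nat) (alpha : R) : R :=
  \sum_(l < k.+1)
     ('C(m + l - 1, m - 1))%:R * (stirling1 (m + k - 1) (m + l - 1))%:~R
     * (((m + k)%:R - alpha) / 2) ^+ l.

Definition asin_ratio_pow {R : realType} (m : nat) (t : R) : R :=
  if t == 0 then 1 else (asin t / t) ^+ m.

Definition asin_term {R : realType} (m k : nat) (t : R) : R :=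
  if k == 0%N then 1 else
  (-1) ^+ k * Qfun m (2 * k) (2 : R) / ('C(m + 2 * k, m))%:R
    * (2 * t) ^+ (2 * k) / ((2 * k)`!)%:R.

From HB Require Import structures.
From mathcomp Require Import all_boot all_order all_algebra.
From mathcomp Require Import all_classical all_reals all_analysis.
From mathcomp Require Import ring lra zify.
Set Implicit Arguments. Unset Strict Implicit. Unset Printing Implicit Defensive.
Import Order.TTheory GRing.Theory Num.Theory.
Import numFieldNormedType.Exports.
Local Open Scope classical_set_scope.
Local Open Scope ring_scope.

(* The series for (arcsin t / t)^m is obtained from the Maclaurin series of
   (arcsin x)^j,   (arcsin x)^j = sum_n  j! T(n,j) x^n / n!,   where T(n,j) are
   the central factorial numbers, T(n+2,j) = n^2 T(n,j) + T(n,j-2).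

   Up to signs and powers of 2, T(n,j) is the j-th
      coefficient of the central factorial polynomial
      x^[n] = x (x + n/2 - 1) (x + n/2 - 2) ... (x - n/2 + 1); writing x^[n] as
      x times a shifted falling factorial expresses that coefficient through
      Stirling numbers of the first kind, which gives
      T(m+2k, m) = (-4)^k Q(m,2k;2).
   2. Analysis.  For coefficients all of whose formal derivatives have terms
      bounded on every radius r < 1, the sum psum c of the power series is
      differentiable on (-1,1) with the termwise derivative.
   3. With y_j = psum (j! T(.,j)/.!), the recurrence on T says
      (1-x^2) y_j'' - x y_j' = j(j-1) y_(j-2).  Substituting x = sin t turns
      the left side into d^2/dt^2 (y_j (sin t)); by strong induction on j,
      y_j (sin t) - t^j has vanishing second and first derivatives and
      vanishes at 0, hence y_j (sin t) = t^j on (-pi/2, pi/2).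
   4. For j = m only the terms n = m + 2k survive; dividing by t^m and
      matching coefficients with step 1 gives the theorem. *)

(* Central factorial numbers T(n,j): T(0,j) = [j = 0], T(1,j) = [j = 1] and
   T(n+2,j) = n^2 T(n,j) + T(n,j-2).  Up to j!/n!, they are the Maclaurin
   coefficients of (arcsin x)^j. *)
Fixpoint cfact (n j : nat) : nat :=
  match n with
  | 0 => j == 0
  | 1 => j == 1
  | k.+2 => k ^ 2 * cfact k j + (if j is j'.+2 then cfact k j' else 0)
  end.

Lemma cfact_small n j : (n < j)%N -> cfact n j = 0%N.
Proof.
elim/ltn_ind: n j => -[|[|n]] IH j /= hj; try by case: j hj => [|[|]].
rewrite (IH n) ?muln0 ?add0n //; last by lia.
by case: j hj => [|[|j]] // hj; rewrite IH //; lia.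
Qed.

Lemma cfact_odd n j : odd (n + j) -> cfact n j = 0%N.
Proof.
elim/ltn_ind: n j => -[|[|n]] IH j /= hj.
- by case: j hj.
- by case: j hj => [|[|j]] //=; rewrite ?oddD /= ?negbK.
rewrite (IH n) ?muln0 ?add0n //; last by move: hj; rewrite !oddD /= ?negbK ?oddD.
case: j hj => [|[|j]] // hj; rewrite IH //.
by move: hj; rewrite !oddD /= !negbK.
Qed.

Lemma cfact_diag n : cfact n n = 1%N.
Proof.
by elim/ltn_ind: n => -[|[|n]] IH //=; rewrite cfact_small ?muln0 ?IH.
Qed.

(* T(n,j) <= n!: the Maclaurin coefficients of (arcsin x)^j are bounded. *)
Lemma cfact_le_fact n j : (cfact n j <= n`!)%N.
Proof.
elim/ltn_ind: n j => -[|[|n]] IH j /=; try by case: eqP.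
have h1 := IH n (leqW (ltnSn n)) j.
have h2 : ((if j is j'.+2 then cfact n j' else 0) <= n`!)%N.
  by case: (j) => [|[|i]] //; rewrite IH.
rewrite !factS; nia.
Qed.

Lemma coef_XaddC_exp (R : comNzRingType) (c : R) i l :
  (('X + c%:P) ^+ i)`_l = c ^+ (i - l) *+ 'C(i, l).
Proof.
rewrite addrC exprDn coef_sum.
under eq_bigr => r _ do rewrite coefMn -rmorphXn coefCM coefXn.
have [li|il] := leqP l i.
  rewrite (bigD1 (Ordinal (leq_ltn_trans li (ltnSn i)))) //= eqxx mulr1.
  rewrite big1 ?addr0 // => r /eqP hr; rewrite eq_sym.
  by case: eqP => [h|_]; [case: hr; apply: val_inj | rewrite mulr0 mul0rn].
rewrite bin_small // mulr0n big1 // => r _.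
have : (r < l)%N by apply: leq_trans (ltn_ord r) il.
by rewrite ltn_neqAle eq_sym => /andP[/negbTE -> _]; rewrite mulr0 mul0rn.
Qed.

Definition falling (N : nat) : {poly int} := \prod_(j < N) ('X - ((j : nat)%:Z)%:P).

Section CentralFactorialPolynomial.
Variable R : numFieldType.

(* The centre (n-2)/2 of the shifted falling factorial inside x^[n]. *)
Definition cf_centre (n : nat) : R := (n%:R - 2) / 2.

Definition cfpoly (n : nat) : {poly R} :=
  if n is 0 then 1 else 'X * \prod_(i < n.-1) ('X - (i%:R - cf_centre n)%:P).

Lemma cfpoly_rec n : cfpoly n.+2 = ('X^2 - (n%:R ^+ 2 / 4)%:P) * cfpoly n.
Proof.
case: n => [|n].
  rewrite /cfpoly /= big_ord1 /cf_centre /=.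
  have -> : (0%:R : R) - (2%:R - 2) / 2 = 0 by field.
  by rewrite expr0n /= mul0r subr0 mulr1; ring.
rewrite /cfpoly /= big_ord_recl big_ord_recr /=.
rewrite (eq_bigr (fun i : 'I_n => 'X - ((i%:R : R) - cf_centre n.+1)%:P)); last first.
  by move=> i _; rewrite /bump /= add1n /cf_centre !mulrS; congr ('X - _%:P); field.
have -> : (0%:R : R) - cf_centre n.+3 = - ((n%:R + 1) / 2).
  by rewrite /cf_centre !mulrS; field.
have -> : ((bump 0 n)%:R : R) - cf_centre n.+3 = (n%:R + 1) / 2.
  by rewrite /cf_centre /bump /= add1n !mulrS; field.
have -> : (n.+1%:R : R) ^+ 2 / 4 = (n%:R + 1) / 2 * ((n%:R + 1) / 2).
  by rewrite mulrS; field.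
move: ((n%:R + 1) / 2) => c; rewrite polyCN polyCM; ring.
Qed.

Lemma coef_cfpoly_rec n j : (cfpoly n.+2)`_j =
  (if j is j'.+2 then (cfpoly n)`_j' else 0) - (n%:R ^+ 2 / 4) * (cfpoly n)`_j.
Proof.
rewrite cfpoly_rec mulrBl coefB coefXnM coefCM.
by case: j => [|[|j]] //=; rewrite subn2.
Qed.

(* The sign (-1)^(floor (n/2)) relating x^[n] to the numbers T(n,j). *)
Definition half_sign (n : nat) : R := (-1) ^+ n./2.

Lemma half_signSS n : half_sign n.+2 = - half_sign n.
Proof. by rewrite /half_sign /= exprS mulN1r. Qed.

(* The numbers T(n,j) are, up to sign and a power of 2, the coefficients of
   x^[n]: both sides satisfy the same two-step recurrence in n. *)
Lemma cfact_cfpoly n j :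
  (cfact n j)%:R * 2 ^+ j * half_sign j = 2 ^+ n * half_sign n * (cfpoly n)`_j.
Proof.
elim/ltn_ind: n j => -[|[|n]] IH j.
- rewrite /cfpoly coef1 /=; case: j => [|j] /=; first by rewrite /half_sign !mulr1.
  by rewrite !mul0r mulr0.
- rewrite /cfpoly big_ord0 mulr1 coefX /=.
  by case: j => [|[|j]] /=; rewrite ?mul0r ?mulr0 // /half_sign /= !mulr1 mul1r.
have hs i : half_sign i != 0 by rewrite expf_neq0 // oppr_eq0 oner_eq0.
have h2 i : (2 : R) ^+ i != 0 by rewrite expf_neq0 // pnatr_eq0.
have IHn i : (cfact n i)%:R = 2 ^+ n * half_sign n * (cfpoly n)`_i / (2 ^+ i * half_sign i).
  by rewrite -IH // -(mulrA _ (2 ^+ i)) mulfK // mulf_neq0.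
rewrite coef_cfpoly_rec /= natrD natrM natrX IHn half_signSS.
case: j => [|[|j]] /=; rewrite ?addr0 ?IHn ?half_signSS ?exprS; field;
  by rewrite ?hs ?h2 ?oppr_eq0 ?hs.
Qed.
End CentralFactorialPolynomial.

Lemma cfpoly_falling (R : numFieldType) n : (0 < n)%N ->
  cfpoly R n = 'X * (map_poly intr (falling n.-1) \Po ('X + (cf_centre R n)%:P)).
Proof.
case: n => // n _; congr ('X * _).
rewrite /falling map_prod_XsubC.
rewrite (big_morph _ (fun p q => comp_polyM p q _) (comp_polyC 1 _)).
apply: eq_bigr => i _; rewrite comp_polyB comp_polyX comp_polyC polyCB /=.
rewrite (_ : ((i : nat)%:Z)%:~R = (i : nat)%:R :> R) //; ring.
Qed.

Lemma coef_cfpoly (R : numFieldType) n l : (0 < n)%N ->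
  (cfpoly R n)`_l.+1 =
  \sum_(i < n) (stirling1 n.-1 i)%:~R * (cf_centre R n ^+ (i - l) *+ 'C(i, l)).
Proof.
move=> n0; rewrite cfpoly_falling // coefXM coef_comp_poly.
have -> : size (map_poly (intr : int -> R) (falling n.-1)) = n.
  by rewrite /falling map_prod_XsubC size_prod_XsubC /index_enum -enumT size_enum_ord prednK.
by apply: eq_bigr => i _; rewrite coef_map coef_XaddC_exp.
Qed.

Lemma coef_cfpoly_Qfun (R : realType) m k : (0 < m)%N ->
  (cfpoly R (m + 2 * k))`_m = Qfun m (2 * k) 2.
Proof.
case: m => // m _; rewrite coef_cfpoly ?addSn // /Qfun.
rewrite -addnS big_split_ord /= big1 ?add0r; last first.
  by move=> i _; rewrite bin_small ?mulr0n ?mulr0.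
apply: eq_bigr => l _ /=.
rewrite !addSn !subn1 /= addnS /= addKn /cf_centre -mulr_natl.
by rewrite mulrA [X in X * _]mulrC.
Qed.

Lemma cfact_Qfun (R : realType) m k : (0 < m)%N ->
  (cfact (m + 2 * k) m)%:R = (-4) ^+ k * Qfun m (2 * k) (2 : R).
Proof.
move=> m0; have := cfact_cfpoly R (m + 2 * k) m.
have -> : half_sign R (m + 2 * k) = (-1) ^+ k * half_sign R m.
  elim: k => [|k IH]; first by rewrite muln0 addn0 mul1r.
  by rewrite (_ : m + 2 * k.+1 = (m + 2 * k).+2)%N ?half_signSS ?IH ?exprS; [ring | lia].
rewrite coef_cfpoly_Qfun // exprD exprM (_ : (2 : R) ^+ 2 = 4); last by ring.
have hs : half_sign R m != 0 by rewrite expf_neq0 // oppr_eq0 oner_eq0.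
have h2 : (2 : R) ^+ m != 0 by rewrite expf_neq0 // pnatr_eq0.
move=> /(congr1 (fun x => x / (2 ^+ m * half_sign R m))).
rewrite -mulrA mulfK ?mulf_neq0 // => ->.
rewrite (_ : (-4 : R) ^+ k = (-1) ^+ k * 4 ^+ k); last by rewrite -exprMn mulN1r.
move: ((4 : R) ^+ k) ((-1 : R) ^+ k) (Qfun m (2 * k) (2 : R)) => a b c.
by field; rewrite hs h2.
Qed.

Section PowerSeries.
Variable R : realType.
Implicit Types (c : R ^nat) (x z r : R).

(* Comparison with a geometric series: if the terms c_n x^n are bounded,
   the power series converges at every z with |z| < |x|. *)
Lemma pseries_cvg_bounded_terms c x z M :
  (forall n, `|c n| * `|x| ^+ n <= M) -> `|z| < `|x| -> cvgn (pseries c z).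
Proof.
move=> hM zx; have x0 : 0 < `|x| by apply: le_lt_trans zx.
set q := `|z| / `|x|.
have q0 : 0 <= q by rewrite divr_ge0.
have q1 : q < 1 by rewrite ltr_pdivrMr // mul1r.
have M0 : 0 <= M by apply: le_trans (hM 0%N); rewrite mulr_ge0.
apply: normed_cvg; rewrite /normed_series_of /=.
apply: (@series_le_cvg _ _ (geometric M q)) => //.
- by move=> n; rewrite /geometric /= mulr_ge0 // exprn_ge0.
- move=> n; rewrite /geometric /= normrM normrX.
  have -> : `|z| ^+ n = `|x| ^+ n * q ^+ n.
    by rewrite /q exprMn exprVn mulrCA divff ?mulr1 // expf_neq0 // gt_eqF.
  by rewrite mulrA ler_wpM2r // exprn_ge0.
- by apply: is_cvg_geometric_series; rewrite ger0_norm.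
Qed.

(* (n+1) q^n <= 1/(1-q) for 0 <= q < 1, as (n+1) q^n <= sum_(i<=n) q^i. *)
Lemma natr_exp_le (q : R) n : 0 <= q -> q < 1 -> n.+1%:R * q ^+ n <= (1 - q)^-1.
Proof.
move=> q0 q1; have h1q : 0 < 1 - q by rewrite subr_gt0.
apply: le_trans (_ : \sum_(i < n.+1) q ^+ i <= _).
  rewrite mulr_natl -[X in _ *+ X]card_ord -sumr_const; apply: ler_sum => i _.
  by apply: ler_wiXn2l => //; [exact: ltW | rewrite -ltnS].
have hs : (1 - q) * \sum_(i < n.+1) q ^+ i = 1 - q ^+ n.+1.
  by rewrite -opprB mulNr -subrX1 opprB.
rewrite -[X in X <= _](mulKf (lt0r_neq0 h1q)) hs.
rewrite -[X in _ <= X]mulr1 ler_wpM2l ?invr_ge0 ?(ltW h1q) //.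
by rewrite gerBl exprn_ge0.
Qed.

Lemma pseries_diffs_bounded_terms c x z M :
  (forall n, `|c n| * `|x| ^+ n <= M) -> `|z| < `|x| ->
  exists M', forall n, `|pseries_diffs c n| * `|z| ^+ n <= M'.
Proof.
move=> hM zx; have x0 : 0 < `|x| by apply: le_lt_trans zx.
set q := `|z| / `|x|.
have q0 : 0 <= q by rewrite divr_ge0.
have q1 : q < 1 by rewrite ltr_pdivrMr // mul1r.
have M0 : 0 <= M by apply: le_trans (hM 0%N); rewrite mulr_ge0.
exists (M / `|x| * (1 - q)^-1) => n.
rewrite /pseries_diffs normrM normr_nat.
have -> : `|z| ^+ n = `|x| ^+ n.+1 / `|x| * q ^+ n.
  by rewrite /q exprMn exprVn exprS; field; rewrite !expf_neq0 ?gt_eqF.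
have -> : n.+1%:R * `|c n.+1| * (`|x| ^+ n.+1 / `|x| * q ^+ n) =
  (`|c n.+1| * `|x| ^+ n.+1) / `|x| * (n.+1%:R * q ^+ n) by ring.
apply: ler_pM; rewrite ?mulr_ge0 ?exprn_ge0 ?invr_ge0 ?natr_exp_le //.
by rewrite ler_pM2r ?invr_gt0.
Qed.

Definition unit_radius c := forall k r, 0 <= r -> r < 1 ->
  exists M, forall n, `|iter k (@pseries_diffs R) c n| * r ^+ n <= M.

Lemma unit_radius_diffs c : unit_radius c -> unit_radius (pseries_diffs c).
Proof. by move=> hc k r r0 r1; have := hc k.+1 r r0 r1; rewrite iterSr. Qed.

Lemma bounded_unit_radius c B : (forall n, `|c n| <= B) -> unit_radius c.
Proof.
move=> hB k; elim: k => [|k IH] r r0 r1.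
  exists B => n; rewrite -[X in _ <= X]mulr1.
  by apply: ler_pM; rewrite ?exprn_ge0 ?exprn_ile1 ?(ltW r1).
have r'0 : 0 <= (r + 1) / 2 by rewrite divr_ge0 // addr_ge0.
have [|M hM] := IH ((r + 1) / 2) r'0; first by rewrite ltr_pdivrMr //; lra.
have zx : `|r| < `|(r + 1) / 2| by rewrite !ger0_norm // ltr_pdivlMr //; lra.
have hM2 n : `|iter k (@pseries_diffs R) c n| * `|(r + 1) / 2| ^+ n <= M.
  by rewrite (ger0_norm r'0).
have [M' hM'] := pseries_diffs_bounded_terms hM2 zx.
by exists M' => n; rewrite iterS -(ger0_norm r0).
Qed.

Lemma unit_radius_cvg c x : unit_radius c -> `|x| < 1 -> cvgn (pseries c x).
Proof.
move=> hc x1; have r0 : 0 <= (`|x| + 1) / 2 by rewrite divr_ge0 // addr_ge0.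
have [|M hM] := hc 0%N ((`|x| + 1) / 2) r0; first by rewrite ltr_pdivrMr //; lra.
apply: (@pseries_cvg_bounded_terms _ ((`|x| + 1) / 2) _ M).
  by move=> n; rewrite (ger0_norm r0); apply: hM.
by rewrite (ger0_norm r0) ltr_pdivlMr //; lra.
Qed.

Definition psum c x := limn (pseries c x).

Lemma psum_cvg c x : unit_radius c -> `|x| < 1 -> pseries c x @ \oo --> psum c x.
Proof. exact: unit_radius_cvg. Qed.

Lemma psum_derive c x : unit_radius c -> `|x| < 1 ->
  is_derive x 1 (psum c) (psum (pseries_diffs c) x).
Proof.
move=> hc x1; set K := (`|x| + 1) / 2.
have K0 : 0 <= K by rewrite divr_ge0 // addr_ge0.
have K1 : `|K| < 1 by rewrite ger0_norm // ltr_pdivrMr //; lra.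
apply: (@pseries_snd_diffs _ c K x); rewrite ?(ger0_norm K0).
- exact: unit_radius_cvg.
- exact/unit_radius_cvg/K1/unit_radius_diffs.
- exact/unit_radius_cvg/K1/unit_radius_diffs/unit_radius_diffs.
- by rewrite ltr_pdivlMr //; lra.
Qed.

Lemma psum0 c : psum c 0 = c 0%N.
Proof.
apply: cvg_lim => //; rewrite -cvg_shiftS.
have -> : [sequence pseries c 0 n.+1]_n = cst (c 0%N).
  apply/funext => n; rewrite /pseries /series /= big_nat_recl //= expr0 mulr1.
  by rewrite big1 ?addr0 // => i _; rewrite expr0n /= mulr0.
exact: cvg_cst.
Qed.

(* Coefficients of x * (sum c_n x^n). *)
Definition shiftX c : R ^nat := fun n => if n is n'.+1 then c n' else 0.

Lemma pseries_shiftX c x l : pseries c x @ \oo --> l ->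
  pseries (shiftX c) x @ \oo --> x * l.
Proof.
move=> h; rewrite -cvg_shiftS.
have -> : [sequence pseries (shiftX c) x n.+1]_n = (fun n => x * pseries c x n).
  apply/funext => n; rewrite /pseries /series /= big_nat_recl //= mul0r add0r.
  by rewrite mulr_sumr; apply: eq_bigr => i _; rewrite exprS; ring.
exact: cvgMr.
Qed.

Lemma psum_ode c x : unit_radius c -> `|x| < 1 ->
  let d1 := pseries_diffs c in let d2 := pseries_diffs d1 in
  pseries (fun n => d2 n - shiftX (shiftX d2) n - shiftX d1 n) x @ \oo -->
    (1 - x ^+ 2) * psum d2 x - x * psum d1 x.
Proof.
move=> hc x1 d1 d2.
have h1 := psum_cvg (unit_radius_diffs hc) x1.
have h2 := psum_cvg (unit_radius_diffs (unit_radius_diffs hc)) x1.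
have -> : pseries (fun n => d2 n - shiftX (shiftX d2) n - shiftX d1 n) x =
  (fun n => pseries d2 x n - pseries (shiftX (shiftX d2)) x n - pseries (shiftX d1) x n).
  apply/funext => n; rewrite /pseries /series /= -!sumrB.
  by apply: eq_bigr => i _; ring.
rewrite (_ : (1 - x ^+ 2) * _ = psum d2 x - x * (x * psum d2 x)); last by ring.
by apply: cvgB; [apply: cvgB => //; do 2 apply: pseries_shiftX | apply: pseries_shiftX].
Qed.

Lemma psum_scale k c x : unit_radius c -> `|x| < 1 ->
  pseries (fun n => k * c n) x @ \oo --> k * psum c x.
Proof.
move=> hc x1.
have -> : pseries (fun n => k * c n) x = (fun n => k * pseries c x n).
  apply/funext => n; rewrite /pseries /series /= mulr_sumr.
  by apply: eq_bigr => i _; rewrite mulrA.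
by apply: cvgMr; apply: psum_cvg.
Qed.
End PowerSeries.

Section ArcsinCoefficients.
Variable R : realType.

(* The Maclaurin coefficients j! T(n,j) / n! of (arcsin x)^j. *)
Definition asin_coef (j n : nat) : R := j`!%:R * (cfact n j)%:R / n`!%:R.

Lemma asin_coef_rec j n : (n.+1 * n.+2)%:R * asin_coef j n.+2 =
  (n ^ 2)%:R * asin_coef j n + (j * j.-1)%:R * asin_coef j.-2 n.
Proof.
have hf : (n`!%:R : R) != 0 by rewrite pnatr_eq0 -lt0n fact_gt0.
rewrite /asin_coef /= !factS !natrM.
have hn := ler0n R n.
case: j => [|[|j]] /=; rewrite ?mul0n ?mul0r ?addr0 ?factS ?natrD ?natrM ?natrX;
  field; rewrite hf /=; repeat (apply/andP; split); apply/lt0r_neq0; lra.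
Qed.

Lemma asin_coef0 j : asin_coef j 0 = (j == 0%N)%:R.
Proof. by rewrite /asin_coef; case: j => [|j] /=; rewrite ?mulr0 ?mul0r ?mulr1 ?divr1. Qed.

Lemma asin_coef1 j : asin_coef j 1 = (j == 1%N)%:R.
Proof. by rewrite /asin_coef; case: j => [|[|j]] /=; rewrite ?mulr0 ?mul0r ?mulr1 ?divr1. Qed.

Lemma asin_coef_bound j n : `|asin_coef j n| <= j`!%:R.
Proof.
have hf : (0 : R) < n`!%:R by rewrite ltr0n fact_gt0.
rewrite /asin_coef ger0_norm ?divr_ge0 ?mulr_ge0 // ler_pdivrMr //.
by rewrite ler_wpM2l // ler_nat cfact_le_fact.
Qed.

Lemma asin_coef_unit_radius j : unit_radius (asin_coef j).
Proof. exact: (bounded_unit_radius (@asin_coef_bound j)). Qed.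

Lemma asin_coef_ode j :
  let d1 := pseries_diffs (asin_coef j) in let d2 := pseries_diffs d1 in
  (fun n => d2 n - shiftX (shiftX d2) n - shiftX d1 n) =
  (fun n => (j * j.-1)%:R * asin_coef j.-2 n).
Proof.
move=> d1 d2; apply/funext => n.
have -> : (j * j.-1)%:R * asin_coef j.-2 n =
  (n.+1 * n.+2)%:R * asin_coef j n.+2 - (n ^ 2)%:R * asin_coef j n.
  by rewrite asin_coef_rec; ring.
rewrite /d2 /d1 /pseries_diffs /shiftX.
by case: n => [|[|k]] /=; rewrite !natrM /=; ring.
Qed.

Lemma psum_asin_coef_ode j x : `|x| < 1 ->
  let d1 := pseries_diffs (asin_coef j) in let d2 := pseries_diffs d1 in
  (1 - x ^+ 2) * psum d2 x - x * psum d1 x = (j * j.-1)%:R * psum (asin_coef j.-2) x.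
Proof.
move=> x1 d1 d2; have := psum_ode (asin_coef_unit_radius j) x1.
have := asin_coef_ode j; rewrite /= => -> hode.
have := psum_scale (k := (j * j.-1)%:R) (asin_coef_unit_radius j.-2) x1.
exact: cvg_unique hode.
Qed.
End ArcsinCoefficients.

Section SineSubstitution.
Variable R : realType.
Implicit Types (c : R ^nat) (t : R).

Lemma sin_norm_lt1 t : -(pi / 2) < t < pi / 2 -> `|sin t| < 1.
Proof.
move=> /cos_gt0_pihalf c0; have : sin t ^+ 2 < 1 by rewrite sin2cos2 gtrBl exprn_gt0.
by move=> s2; rewrite ltr_norml; apply/andP; split; nra.
Qed.

Lemma is_derive0_eq_on_itv (f : R -> R) (u v a b : R) :
  (forall x, u < x < v -> is_derive x 1 f 0) ->
  u < a < v -> u < b < v -> f a = f b.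
Proof.
move=> hd; wlog ab : a b / a <= b.
  by move=> H ha hb; have [/H|/ltW/H] := leP a b; [apply | move=> h; apply/esym/h].
move=> /andP[ua av] /andP[ub bv].
have hab x : a <= x <= b -> is_derive x 1 f 0.
  move=> /andP[ax xb]; apply: hd.
  by apply/andP; split; [apply: lt_le_trans ax | apply: le_lt_trans bv].
have hder x : x \in `]a, b[ -> is_derive x 1 f 0.
  by rewrite in_itv /= => /andP[ax xb]; apply: hab; rewrite !ltW.
have hcont : {within `[a, b], continuous f}.
  by apply: derivable_within_continuous => x; rewrite in_itv /= => /hab [].
have [c _] := MVT_segment ab hder hcont.
by rewrite mul0r => /eqP; rewrite subr_eq0 => /eqP.
Qed.

Lemma is_derive_exprn n t : is_derive t 1 (fun s : R => s ^+ n) (n%:R * t ^+ n.-1).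
Proof.
have := is_deriveX n (is_derive_id t (1 : R)).
rewrite (_ : (@id R) ^+ n = (fun s : R => s ^+ n)); last first.
  by apply/funext => s; rewrite exprfctE.
by move/is_derive_eq; apply; rewrite [_%:A]mulr1.
Qed.

Lemma psum_sin_derive c t : unit_radius c -> -(pi / 2) < t < pi / 2 ->
  is_derive t 1 (psum c \o sin) (psum (pseries_diffs c) (sin t) * cos t).
Proof.
by move=> hc /sin_norm_lt1 ht; apply: is_derive1_comp (psum_derive hc ht) (is_derive_sin t).
Qed.

(* The substitution x = sin t turns (1 - x^2) D^2 - x D into d^2/dt^2. *)
Lemma psum_sin_second_derive c t : unit_radius c -> -(pi / 2) < t < pi / 2 ->
  let d1 := pseries_diffs c in let d2 := pseries_diffs d1 in
  is_derive t 1 (fun s => psum d1 (sin s) * cos s)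
    ((1 - sin t ^+ 2) * psum d2 (sin t) - sin t * psum d1 (sin t)).
Proof.
move=> hc ht d1 d2.
have := is_deriveM (psum_sin_derive (unit_radius_diffs hc) ht) (is_derive_cos t).
rewrite (_ : (psum d1 \o sin) * cos = (fun s => psum d1 (sin s) * cos s)) //.
by move/is_derive_eq; apply; rewrite -cos2sin2 /GRing.scale /=; ring.
Qed.
End SineSubstitution.

(* The Maclaurin series of (arcsin x)^j: its sum at sin t is t^j for
   |t| < pi/2.  By strong induction on j, F2 = d/dt (y_j (sin t) - t^j) has
   zero derivative by the ODE and the induction hypothesis, and vanishes at 0;
   then y_j (sin t) - t^j is constant, equal to its value 0 at t = 0. *)
Lemma psum_asin_coef_sin (R : realType) j (t : R) : -(pi / 2) < t < pi / 2 ->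
  psum (asin_coef R j) (sin t) = t ^+ j.
Proof.
elim/ltn_ind: j t => j IH t ht.
have hc := asin_coef_unit_radius (R := R) j.
have I0 : -(pi / 2) < (0 : R) < pi / 2 by apply/andP; split; have := pi_gt0 R; lra.
pose F1 s := psum (asin_coef R j) (sin s) - s ^+ j.
pose F2 s := psum (pseries_diffs (asin_coef R j)) (sin s) * cos s - j%:R * s ^+ j.-1.
have dF2 x : -(pi / 2) < x < pi / 2 -> is_derive x 1 F2 0.
  move=> hx; have := is_deriveB (psum_sin_second_derive hc hx)
    (is_deriveZ j%:R (is_derive_exprn j.-1 x)).
  move/(is_derive_eq (f := F2)); apply.
  rewrite psum_asin_coef_ode ?sin_norm_lt1 // [_ *: _]mulrA -natrM.
  have [j2|j2] := ltnP j 2.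
    by rewrite (_ : j * j.-1 = 0)%N ?mul0r ?subrr //; case: (j) j2 => [|[|]].
  by rewrite IH ?subrr //; lia.
have F2_0 x : -(pi / 2) < x < pi / 2 -> F2 x = 0.
  move=> hx; rewrite (is_derive0_eq_on_itv dF2 hx I0) /F2 sin0 cos0 psum0.
  rewrite /pseries_diffs asin_coef1.
  by case: j {IH hc F1 F2 dF2} => [|[|j]]; rewrite ?expr0 ?expr0n /=; ring.
have dF1 x : -(pi / 2) < x < pi / 2 -> is_derive x 1 F1 0.
  move=> hx; have := is_deriveB (psum_sin_derive hc hx) (is_derive_exprn j x).
  by move/(is_derive_eq (f := F1)); apply; rewrite -[RHS](F2_0 x hx).
have := is_derive0_eq_on_itv dF1 ht I0.
rewrite /F1 sin0 psum0 asin_coef0 expr0n subrr.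
by move/eqP; rewrite subr_eq0 => /eqP.
Qed.

Section ArcsinPowerTerms.
Variable R : realType.

Lemma asin_coef_term m k (t : R) : (0 < m)%N ->
  asin_coef R m (m + 2 * k) * t ^+ (2 * k) = asin_term m k t.
Proof.
move=> m0; rewrite /asin_term /asin_coef.
have hf n : (n`!%:R : R) != 0 by rewrite pnatr_eq0 -lt0n fact_gt0.
have [->|k0] := eqVneq k 0%N; first by rewrite muln0 addn0 cfact_diag expr0 !mulr1 divff.
rewrite cfact_Qfun //.
have hb := bin_fact (leq_addr (2 * k) m); rewrite addKn in hb.
have hC : ('C(m + 2 * k, m)%:R : R) != 0 by rewrite pnatr_eq0 -lt0n bin_gt0 leq_addr.
rewrite -[(m + 2 * k)`!]hb !natrM.
have -> : (-4 : R) ^+ k = (-1) ^+ k * 4 ^+ k by rewrite -exprMn mulN1r.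
have -> : (2 * t) ^+ (2 * k) = 4 ^+ k * t ^+ (2 * k).
  by rewrite exprMn exprM (_ : (2 : R) ^+ 2 = 4) //; ring.
move: hC (hf m) (hf (2 * k)).
move: ('C(m + 2 * k, m)%:R : R) (m`!%:R : R) ((2 * k)`!%:R : R) => C a b hC ha hb'.
move: ((-1 : R) ^+ k) ((4 : R) ^+ k) (Qfun m (2 * k) (2 : R)) (t ^+ (2 * k)) => s u Q v.
by field; rewrite hC ha hb'.
Qed.

Lemma asin_coef_small j n : (n < j)%N -> asin_coef R j n = 0.
Proof. by move=> h; rewrite /asin_coef cfact_small // mulr0 mul0r. Qed.

Lemma asin_coef_odd j n : odd (n + j) -> asin_coef R j n = 0.
Proof. by move=> h; rewrite /asin_coef cfact_odd // mulr0 mul0r. Qed.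

Lemma sum_asin_coef_even m k (t : R) :
  \sum_(0 <= n < m.+1 + 2 * k) asin_coef R m n * t ^+ n =
  t ^+ m * \sum_(0 <= i < k.+1) asin_coef R m (m + 2 * i) * t ^+ (2 * i).
Proof.
elim: k => [|k IH].
  rewrite muln0 addn0 big_nat_recr //= big_nat1 muln0 addn0 expr0 mulr1.
  rewrite big_nat_cond big1 ?add0r; first by rewrite mulrC.
  by move=> n /andP[/andP[_ hn] _]; rewrite asin_coef_small // mul0r.
rewrite (_ : m.+1 + 2 * k.+1 = (m.+1 + 2 * k).+2)%N; last by lia.
rewrite big_nat_recr //= big_nat_recr //= IH [in RHS]big_nat_recr //= mulrDr.
rewrite (@asin_coef_odd m (m.+1 + 2 * k)) ?mul0r ?addr0; last first.
  by rewrite (_ : m.+1 + 2 * k + m = (2 * (m + k)).+1)%N ?oddS ?oddM //; lia.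
rewrite (_ : (m.+1 + 2 * k).+1 = m + 2 * k.+1)%N; last by lia.
by rewrite exprD mulrCA.
Qed.
End ArcsinPowerTerms.

(* Main theorem: for t = 0 every term but the first vanishes; otherwise the
   partial sums are t^(-m) times a subsequence of the partial sums of the
   series of (arcsin t)^m. *)
Theorem theorem2p1 (R : realType) (m : nat) (t : R) :
  (0 < m)%N -> `|t| < 1 ->
  series (fun k : nat => asin_term m k t) @ \oo --> asin_ratio_pow m t.
Proof.
move=> m0 t1; rewrite /asin_ratio_pow -cvg_shiftS.
have [->|t0] := eqVneq t 0.
  have -> : [sequence series (fun k => asin_term m k (0 : R)) n.+1]_n = cst 1.
    apply/funext => n; rewrite /series /= big_nat_recl //= big1 ?addr0 // => i _.
    by rewrite /asin_term /= mulr0 expr0n /= mulr0 mul0r.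
  exact: cvg_cst.
have /andP[tl tu] : -1 < t < 1 by rewrite -ltr_norml.
have hI : -(pi / 2) < asin t < pi / 2.
  by apply/andP; split; [apply: asin_gtNpi2 | apply: asin_ltpi2]; rewrite ?tl ?tu ?ltW.
have hP : pseries (asin_coef R m) t @ \oo --> asin t ^+ m.
  rewrite -[in pseries _ t](asinK (x := t)) ?in_itv /= ?ltW //.
  rewrite -psum_asin_coef_sin //; exact/psum_cvg/sin_norm_lt1/hI/asin_coef_unit_radius.
have hsub : (fun k => pseries (asin_coef R m) t (m.+1 + 2 * k)) @ \oo --> asin t ^+ m.
  exact: cvg_comp (cvg_comp _ _ (@cvg_mulnl 2 isT) (cvg_addnl m.+1)) hP.
have -> : [sequence series (fun k => asin_term m k t) n.+1]_n =
    (fun n => t ^- m * pseries (asin_coef R m) t (m.+1 + 2 * n)).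
  apply/funext => n; rewrite /pseries /series /= sum_asin_coef_even.
  rewrite mulrA mulVf ?expf_neq0 // mul1r.
  by apply: eq_bigr => i _; rewrite asin_coef_term.
by rewrite exprMn exprVn mulrC; apply: cvgMr.
Qed.
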